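(* Let $n\in\mathbb N$, let $0\le x_0<x_1<\dots<x_n\le1$, let $\nu_1,\dots,\nu_n>0$, let $a_1,\dots,a_n\in(0,1]$, and let $\alpha_0,\dots,\alpha_n>0$. (a) If $x_n-x_0<1$, then there exist a unique $C>0$ and a unique system of points $y_1,\dots,y_n$ with $x_j<y_{j+1}<x_{j+1}$ for $j=0,\dots,n-1$ such that $$S(t):=C\prod_{k=1}^n|\sin(a_k\pi(t-y_k))|^{\nu_k}$$ satisfies $S(x_j)=\alpha_j$ for $j=0,\dots,n$. (b) If moreover $\nu_1,\dots,\nu_n\in\mathbb N$, then for these $y_k$ and $C$ the function $T(t):=C\prod_{k=1}^n\sin^{\nu_k}(a_k\pi(t-y_k))$ satisfies $$T(x_j)=(-1)^{\sum_{k=j+1}^n\nu_k}\alpha_j\quad(j=0,1,\dots,n).$$ (c) If $a_1,\dots,a_n<1$, then the assertions of (a) and (b) remain true without the assumption $x_n-x_0<1$. *)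

From mathcomp Require Import all_boot all_order all_algebra.
From mathcomp Require Import all_classical all_reals all_analysis.
Set Implicit Arguments. Unset Strict Implicit. Unset Printing Implicit Defensive.
Import Order.TTheory GRing.Theory Num.Theory.
Local Open Scope ring_scope.

Definition S_fun (R : realType) (n : nat) (C : R) (a nu y : nat -> R) (t : R) : R :=
  C * \prod_(1 <= k < n.+1) (powR `|sin (a k * pi * (t - y k))| (nu k)).

Definition T_fun (R : realType) (n : nat) (C : R) (a y : nat -> R) (m : nat -> nat)
    (t : R) : R :=
  C * \prod_(1 <= k < n.+1) (sin (a k * pi * (t - y k))) ^+ (m k).

Definition is_solution (R : realType) (n : nat) (x a nu alpha : nat -> R)
    (C : R) (y : nat -> R) : Prop :=
  0 < C /\
  (forall j, (j < n)%N -> x j < y j.+1 /\ y j.+1 < x j.+1) /\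
  (forall j, (j <= n)%N -> S_fun n C a nu y (x j) = alpha j).

(* Taking logarithms, S(x_j) = alpha_j reads
   ln C + \sum_k nu_k ln |sin (a_k pi (x_j - y_k))| = ln alpha_j, and subtracting
   consecutive equations eliminates C: what is left is a system
   \sum_k f_jk (y_k) = ln alpha_(j+1) - ln alpha_j in which y_k enters only through
   f_jk (s) = nu_k ln |sin (a_k pi (x_(j+1) - s)) / sin (a_k pi (x_j - s))|.
   All sine arguments lie in (-pi, pi) (this is where x_n - x_0 < 1 or a_k < 1 is
   used), so by sin (A - V) sin (B - U) - sin (A - U) sin (B - V) = sin (A - B) sin (V - U)
   the off-diagonal f_jk are nondecreasing, each column sum \sum_j f_jk is strictly
   decreasing, and f_kk runs from +oo to -oo on (x_(k-1), x_k).  For such monotone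
   systems a comparison principle gives uniqueness, and Perron's method (the
   supremum of all subsolutions) gives existence.  Part (b) only needs the signs of
   the sines at the nodes. *)

From mathcomp Require Import all_boot all_order all_algebra.
From mathcomp Require Import all_classical all_reals all_analysis.
From mathcomp.algebra_tactics Require Import ring lra.
Import Order.TTheory GRing.Theory Num.Theory.
Import numFieldNormedType.Exports.

Set Implicit Arguments.
Unset Strict Implicit.
Unset Printing Implicit Defensive.
Local Open Scope ring_scope.

Lemma near_ball (R : realType) (P : R -> Prop) (c : R) :
  (\forall t \near c, P t) -> exists2 e : R, 0 < e & forall t, `|c - t| < e -> P t.
Proof. by move=> /nbhs_ballP[e e0 cP]; exists e. Qed.

Lemma near_right_point (R : realType) (P : R -> Prop) (c r : R) :
  (\forall t \near c, P t) -> c < r -> exists2 t, c < t < r & P t.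
Proof.
move=> /near_ball[e e0 cP] cr; pose h := Order.min e (r - c).
have h0 : 0 < h by rewrite lt_min e0 subr_gt0.
have he : h <= e by rewrite ge_min lexx.
have hr : h <= r - c by rewrite ge_min lexx orbT.
exists (c + h / 2); first by apply/andP; split; lra.
by apply: cP; rewrite ltr_norml; apply/andP; split; lra.
Qed.

Lemma near_left_point (R : realType) (P : R -> Prop) (l c : R) :
  (\forall t \near c, P t) -> l < c -> exists2 t, l < t < c & P t.
Proof.
move=> /near_ball[e e0 cP] lc; pose h := Order.min e (c - l).
have h0 : 0 < h by rewrite lt_min e0 subr_gt0.
have he : h <= e by rewrite ge_min lexx.
have hl : h <= c - l by rewrite ge_min lexx orbT.
exists (c - h / 2); first by apply/andP; split; lra.
by apply: cP; rewrite ltr_norml; apply/andP; split; lra.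
Qed.

Section MonotoneSystem.
Variables (R : realType) (n : nat) (l r : nat -> R) (f : nat -> nat -> R -> R).

Definition in_box (y : nat -> R) := forall i, (i < n)%N -> l i < y i < r i.

Definition sys_map (y : nat -> R) (j : nat) := \sum_(i < n) f j i (y i).

Definition is_subsol (b : nat -> R) (y : nat -> R) :=
  in_box y /\ forall j, (j < n)%N -> b j <= sys_map y j.

(* Below the diagonal f j i is monotone up to the left end of its interval, above
   it up to the right end: these endpoint values bound the coordinates that are
   still free while sub- and supersolutions are built one coordinate at a time. *)
Hypothesis f_mono_below : forall j i s1 s2, (i < j < n)%N ->
  l i <= s1 -> s1 <= s2 -> s2 < r i -> f j i s1 <= f j i s2.
Hypothesis f_mono_above : forall j i s1 s2, (j < i < n)%N ->
  l i < s1 -> s1 <= s2 -> s2 <= r i -> f j i s1 <= f j i s2.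
Hypothesis colsum_decr : forall i s1 s2, (i < n)%N ->
  l i < s1 -> s1 < s2 -> s2 < r i -> \sum_(j < n) f j i s2 < \sum_(j < n) f j i s1.
Hypothesis diag_cont : forall i s, (i < n)%N -> l i < s < r i -> {for s, continuous (f i i)}.
Hypothesis diag_unbounded_above : forall i M, (i < n)%N ->
  exists2 s, l i < s < r i & M <= f i i s.
Hypothesis diag_unbounded_below : forall i M, (i < n)%N ->
  exists2 s, l i < s < r i & f i i s <= M.

Lemma f_mono_off j i s1 s2 : (j < n)%N -> (i < n)%N -> i != j ->
  l i < s1 -> s1 <= s2 -> s2 < r i -> f j i s1 <= f j i s2.
Proof.
move=> j_n i_n; case: ltngtP => // [ij | ji] _ ls1 s12 s2r.
  by apply: f_mono_below => //; [apply/andP | apply: ltW].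
by apply: f_mono_above => //; [apply/andP | apply: ltW].
Qed.

Lemma sys_map_set y m v j : (m < n)%N ->
  sys_map [eta y with m |-> v] j = sys_map y j + (f j m v - f j m (y m)).
Proof.
move=> m_n; apply/eqP; rewrite addrC -subr_eq /sys_map -sumrB.
rewrite (bigD1 (Ordinal m_n)) //= eqxx.
rewrite big1 ?addr0 // => i im; have /negbTE-> : (i : nat) != m.
  by apply: contraNneq im => eim; exact/eqP/val_inj.
by rewrite subrr.
Qed.

Lemma sys_map_offdiag_le y z j : in_box y -> in_box z ->
  (forall i, (i < n)%N -> y i <= z i) -> (j < n)%N ->
  sys_map y j - f j j (y j) <= sys_map z j - f j j (z j).
Proof.
move=> yb zb yz j_n.
have offdiag u : sys_map u j - f j j (u j) = \sum_(i < n | i != Ordinal j_n) f j i (u i).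
  by rewrite /sys_map (bigD1 (Ordinal j_n)) //= addrC addrK.
rewrite !offdiag.
apply: ler_sum => i ij; have /andP[ly _] := yb i (ltn_ord i).
have /andP[_ zr] := zb i (ltn_ord i).
apply: f_mono_off (j_n) (ltn_ord i) _ ly (yz i (ltn_ord i)) zr.
by apply: contraNneq ij => eij; exact/eqP/val_inj.
Qed.

Lemma colgain_lt0 y w (i : 'I_n) : in_box y -> in_box w -> w i < y i ->
  \sum_(j < n | w j < y j) (f j i (y i) - f j i (w i)) < 0.
Proof.
move=> yb wb wyi; have /andP[ly yr] := yb i (ltn_ord i).
have /andP[lw wr] := wb i (ltn_ord i).
have total : \sum_(j < n) (f j i (y i) - f j i (w i)) < 0.
  by rewrite sumrB subr_lt0; apply: colsum_decr.
have rest : 0 <= \sum_(j < n | ~~ (w j < y j)) (f j i (y i) - f j i (w i)).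
  apply: sumr_ge0 => j wyj; rewrite subr_ge0.
  apply: f_mono_off (ltn_ord j) (ltn_ord i) _ lw (ltW wyi) yr.
  by apply/eqP => eij; move: wyj; rewrite -eij wyi.
by rewrite (bigID (fun j : 'I_n => w j < y j)) /= in total; lra.
Qed.

Lemma colgain_le0 y w (i : 'I_n) : in_box y -> in_box w ->
  \sum_(j < n | w j < y j) (f j i (y i) - f j i (w i)) <= 0.
Proof.
move=> yb wb; have [yw | wy] := leP (y i) (w i); last exact/ltW/colgain_lt0.
apply: sumr_le0 => j wyj; rewrite subr_le0.
have /andP[ly _] := yb i (ltn_ord i); have /andP[_ wr] := wb i (ltn_ord i).
apply: f_mono_off (ltn_ord j) (ltn_ord i) _ ly (yw) wr.
by apply/eqP => eij; move: wyj; rewrite -eij ltNge yw.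
Qed.

(* Sum the rows j with w j < y j: every column contributes a non-positive amount,
   and column i0 a negative one. *)
Lemma sys_map_comparison y w : in_box y -> in_box w ->
  (forall j, (j < n)%N -> sys_map w j <= sys_map y j) ->
  forall i, (i < n)%N -> y i <= w i.
Proof.
move=> yb wb le_wy i0 i0n; rewrite leNgt; apply/negP => wy0.
have gain_ge0 : 0 <= \sum_(j < n | w j < y j) (sys_map y j - sys_map w j).
  by apply: sumr_ge0 => j _; rewrite subr_ge0 le_wy.
have gainE : \sum_(j < n | w j < y j) (sys_map y j - sys_map w j) =
    \sum_(i < n) \sum_(j < n | w j < y j) (f j i (y i) - f j i (w i)).
  by rewrite exchange_big /=; apply: eq_bigr => j _; rewrite /sys_map sumrB.
have := @colgain_lt0 y w (Ordinal i0n) yb wb wy0.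
have : \sum_(i < n | i != Ordinal i0n)
    \sum_(j < n | w j < y j) (f j i (y i) - f j i (w i)) <= 0.
  by apply: sumr_le0 => i _; apply: colgain_le0.
by move: gain_ge0; rewrite gainE (bigD1 (Ordinal i0n)) //=; lra.
Qed.

Lemma sys_map_inj y w : in_box y -> in_box w ->
  (forall j, (j < n)%N -> sys_map y j = sys_map w j) ->
  forall i, (i < n)%N -> y i = w i.
Proof.
move=> yb wb eq_yw i i_n; apply/eqP; rewrite eq_le.
by rewrite !sys_map_comparison // => j j_n; rewrite eq_yw.
Qed.

(* Coordinates are fixed downwards from n - 1, so that row m holds whatever the
   coordinates below m turn out to be. *)
Lemma sys_subsolution b : exists y, is_subsol b y.
Proof.
suff /(_ n 0%N (add0n n)) [y [yb yP]] : forall k m, (m + k)%N = n -> exists y,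
    (forall i, (m <= i < n)%N -> l i < y i < r i) /\
    (forall j, (m <= j < n)%N -> forall z, in_box z ->
       (forall i, (m <= i < n)%N -> z i = y i) -> b j <= sys_map z j).
  by exists y; split=> [i i_n | j j_n]; [exact: yb | apply: yP => // i i_n].
elim=> [|k IH] m mk.
  rewrite addn0 in mk; rewrite mk; exists (fun _ => 0).
  by split=> i; rewrite leqNgt => /andP[/negP].
have m_n : (m < n)%N by rewrite -mk addnS ltnS leq_addr.
have := IH m.+1; rewrite addSnnS => /(_ mk) [y [yb yP]].
pose c := \sum_(i < n | i != Ordinal m_n)
  (if (i < m)%N then f m i (l i) else f m i (y i)).
have [v /andP[lv vr] cv] := diag_unbounded_above (b m - c) m_n.
exists [eta y with m |-> v]; split=> [i /andP[mi i_n] | j /andP[mj j_n] z zb zy].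
  rewrite /=; case: eqP => [-> | /eqP im]; first by rewrite lv vr.
  by apply: yb; rewrite i_n andbT ltn_neqAle eq_sym im.
have [jm | jm] := eqVneq j m; last first.
  apply: yP => //; first by rewrite j_n andbT ltn_neqAle eq_sym jm.
  by move=> i /andP[mi i_n]; rewrite zy ?(ltnW mi) ?i_n //= (gtn_eqF mi).
rewrite {}jm; pose g i := if (i < m)%N then f m i (l i) else f m i (z i).
have le_g : \sum_(i < n) g i <= sys_map z m.
  apply: ler_sum => i _; rewrite /g; case: ltnP => // im.
  have /andP[lz zr] := zb i (ltn_ord i).
  by apply: f_mono_below; rewrite ?im ?(ltW lz).
have gE : \sum_(i < n) g i = f m m v + c.
  rewrite (bigD1 (Ordinal m_n)) //= /g ltnn zy ?leqnn ?m_n //= eqxx.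
  congr (_ + _); apply: eq_bigr => i im; case: ltnP => // mi.
  have /negbTE im' : (i : nat) != m by apply: contraNneq im => eim; exact/eqP/val_inj.
  by rewrite zy ?mi ?ltn_ord //= im'.
lra.
Qed.

Lemma sys_supersolution b : exists y,
  in_box y /\ forall j, (j < n)%N -> sys_map y j <= b j.
Proof.
suff /(_ n (leqnn n)) [y [yb yP]] : forall m, (m <= n)%N -> exists y,
    (forall i, (i < m)%N -> l i < y i < r i) /\
    (forall j, (j < m)%N -> forall z, in_box z ->
       (forall i, (i < m)%N -> z i = y i) -> sys_map z j <= b j).
  by exists y; split=> [i i_n | j j_n]; [exact: yb | apply: yP => // i i_n].
elim=> [|m IH] m_n; first by exists (fun _ => 0).
have [y [yb yP]] := IH (ltnW m_n).
pose c := \sum_(i < n | i != Ordinal m_n)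
  (if (m < i)%N then f m i (r i) else f m i (y i)).
have [v /andP[lv vr] cv] := diag_unbounded_below (b m - c) m_n.
exists [eta y with m |-> v]; split=> [i | j]; rewrite ltnS leq_eqVlt.
  case/orP=> [/eqP-> | im]; first by rewrite /= eqxx lv vr.
  by rewrite /= ifN_eq ?ltn_eqF //; apply: yb.
case/orP=> [/eqP-> | jm] z zb zy; last first.
  by apply: yP => // i im; rewrite zy ?ltnS ?(ltnW im) //= (ltn_eqF im).
pose g i := if (m < i)%N then f m i (r i) else f m i (z i).
have le_g : sys_map z m <= \sum_(i < n) g i.
  apply: ler_sum => i _; rewrite /g; case: ltnP => // mi.
  have /andP[lz zr] := zb i (ltn_ord i).
  by apply: f_mono_above; rewrite ?mi ?ltn_ord ?(ltW zr).
have gE : \sum_(i < n) g i = f m m v + c.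
  rewrite (bigD1 (Ordinal m_n)) //= /g ltnn zy ?ltnS ?leqnn //= eqxx.
  congr (_ + _); apply: eq_bigr => i im; case: ltnP => // im_le.
  have /negbTE im' : (i : nat) != m by apply: contraNneq im => eim; exact/eqP/val_inj.
  by rewrite zy ?ltnS //= im'.
lra.
Qed.

Lemma subsol_limit b ym : in_box ym ->
  (forall y, is_subsol b y -> forall i, (i < n)%N -> y i <= ym i) ->
  (forall i e, (i < n)%N -> 0 < e -> exists2 y, is_subsol b y & ym i - e < y i) ->
  is_subsol b ym.
Proof.
move=> ymb le_ym approx; split=> // j j_n; apply/ler_addgt0Pr => e e0.
have fe : f j j (ym j) < f j j (ym j) + e by rewrite ltrDl.
have near_ym : \forall t \near ym j, f j j t < f j j (ym j) + e :=
  cvgr_lt _ (diag_cont j_n (ymb j j_n)) _ fe.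
have [dl dl0 close] := near_ball (near_ym _).
have [y [yb yP] yj] := approx j dl j_n dl0.
have le_yj := le_ym y (conj yb yP) j j_n.
have fy : f j j (y j) < f j j (ym j) + e.
  by apply: close; rewrite ger0_norm ?subr_ge0 //; lra.
have := sys_map_offdiag_le yb ymb (le_ym y (conj yb yP)) j_n.
have := yP j j_n; lra.
Qed.

Lemma subsol_raise b y j : is_subsol b y -> (j < n)%N -> b j < sys_map y j ->
  exists2 v, y j < v & is_subsol b [eta y with j |-> v].
Proof.
move=> [yb yP] j_n bj; have /andP[lj jr] := yb j j_n.
have fb : f j j (y j) - (sys_map y j - b j) < f j j (y j) by rewrite gtrBl subr_gt0.
have near_yj : \forall t \near y j, f j j (y j) - (sys_map y j - b j) < f j j t :=
  cvgr_gt _ (diag_cont j_n (yb j j_n)) _ fb.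
have [v /andP[yv vr] fv] := near_right_point (near_yj _) jr.
exists v => //; split=> [i i_n | k k_n].
  by rewrite /=; case: eqP => [-> | _]; [rewrite vr (lt_trans lj yv) | apply: yb].
rewrite sys_map_set //; have [-> | kj] := eqVneq k j; first lra.
have : f k j (y j) <= f k j v by apply: f_mono_off => //; [rewrite eq_sym | apply/ltW].
have := yP k k_n; lra.
Qed.

(* Perron's method: the coordinatewise supremum of all subsolutions, which the
   supersolution keeps inside the box, solves the system. *)
Lemma sys_solution b : exists y, in_box y /\ forall j, (j < n)%N -> sys_map y j = b j.
Proof.
have [y0 y0sub] := sys_subsolution b.
have [w [wb wP]] := sys_supersolution b.
have le_w y : is_subsol b y -> forall i, (i < n)%N -> y i <= w i.
  move=> [yb yP]; apply: sys_map_comparison => // j j_n.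
  exact: le_trans (wP j j_n) (yP j j_n).
pose V i := [set y i | y in is_subsol b]%classic.
have V_sup i : (i < n)%N -> has_sup (V i).
  by move=> i_n; split; [exists (y0 i), y0 | exists (w i) => _ [y ysub <-]; exact: le_w].
pose ym i := sup (V i).
have le_ym y : is_subsol b y -> forall i, (i < n)%N -> y i <= ym i.
  by move=> ysub i i_n; apply: sup_upper_bound (V_sup i i_n) _ _; exists y.
have ymb : in_box ym.
  move=> i i_n; have /andP[l0 _] := y0sub.1 i i_n; have /andP[_ wr] := wb i i_n.
  have y0_ym := le_ym y0 y0sub i i_n.
  have ym_w : ym i <= w i.
    by apply: ge_sup (V_sup i i_n).1 _ => _ [y ysub <-]; exact: le_w.
  by apply/andP; split; lra.
have ymsub : is_subsol b ym.
  apply: subsol_limit => // i e i_n e0.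
  by have [_ [y ysub <-] ye] := sup_adherent e0 (V_sup i i_n); exists y.
exists ym; split=> // j j_n; apply/eqP; rewrite eq_le (ymsub.2 j j_n) andbT leNgt.
apply/negP => bj; have [v yv vsub] := subsol_raise ymsub j_n bj.
by have := le_ym _ vsub j j_n; rewrite /= eqxx leNgt yv.
Qed.

End MonotoneSystem.

Lemma ln_normM (R : realType) (u v : R) :
  u * v != 0 -> ln `|u * v| = ln `|u| + ln `|v|.
Proof.
by rewrite mulf_eq0 negb_or => /andP[u0 v0]; rewrite normrM lnM ?posrE ?normr_gt0.
Qed.

Lemma ln_norm_ratio_le (R : realType) (A1 B1 A2 B2 : R) :
  0 < `|A1 * B2| -> `|A1 * B2| <= `|A2 * B1| ->
  ln `|A1| - ln `|B1| <= ln `|A2| - ln `|B2|.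
Proof.
move=> p12 le12; have p21 := lt_le_trans p12 le12.
have : ln `|A1 * B2| <= ln `|A2 * B1| by rewrite ler_ln ?posrE.
by rewrite !ln_normM -?normr_gt0 //; lra.
Qed.

Lemma ln_norm_ratio_lt (R : realType) (A1 B1 A2 B2 : R) :
  0 < `|A1 * B2| -> `|A1 * B2| < `|A2 * B1| ->
  ln `|A1| - ln `|B1| < ln `|A2| - ln `|B2|.
Proof.
move=> p12 lt12; have p21 := lt_trans p12 lt12.
have : ln `|A1 * B2| < ln `|A2 * B1| by rewrite ltr_ln ?posrE.
by rewrite !ln_normM -?normr_gt0 //; lra.
Qed.

Lemma near_ln_ratio_ge (R : realType) (u v : R -> R) (c : R) (M : R) :
  {for c, continuous u} -> {for c, continuous v} -> u c != 0 -> v c = 0 ->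
  \forall t \near c, v t != 0 -> M <= ln `|u t| - ln `|v t|.
Proof.
move=> uc vc uc0 vc0.
have gc : {for c, continuous (fun t => `|u t| - expR M * `|v t|)}.
  apply: continuousB.
    by apply: (continuous_comp (f := u)) => //; exact: norm_continuous.
  apply: continuousM; first exact: cvg_cst.
  by apply: (continuous_comp (f := v)) => //; exact: norm_continuous.
have gc0 : 0 < `|u c| - expR M * `|v c| by rewrite vc0 normr0 mulr0 subr0 normr_gt0.
have near_pos := cvgr_gt _ gc _ gc0.
apply: filterS (near_pos _) => t /= g_pos vt0.
have evt : 0 < expR M * `|v t| by rewrite mulr_gt0 ?expR_gt0 ?normr_gt0.
have uv : expR M * `|v t| < `|u t| by rewrite -subr_gt0.
have : ln (expR M * `|v t|) < ln `|u t| by rewrite ltr_ln ?posrE ?(lt_trans evt uv).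
by rewrite lnM ?posrE ?expR_gt0 ?normr_gt0 // expRK; lra.
Qed.

Lemma sum_nat_gtn (F : nat -> nat) j n : (j <= n)%N ->
  (\sum_(1 <= k < n.+1) (if (j < k)%N then F k else 0) =
   \sum_(j.+1 <= k < n.+1) F k)%N.
Proof.
move=> j_n; rewrite (@big_cat_nat _ _ _ j.+1) //= big1_seq ?add0n; last first.
  by move=> k /andP[_]; rewrite mem_index_iota => /andP[_ kj]; rewrite ltnNge -ltnS kj.
by apply: eq_big_nat => k /andP[jk _]; rewrite jk.
Qed.

Section Interpolation.
Variables (R : realType) (n : nat) (x nu a : nat -> R).
Hypothesis x_incr : forall j, (j < n)%N -> x j < x j.+1.
Hypothesis nu_gt0 : forall i, (i < n)%N -> 0 < nu i.+1.
Hypothesis a_gt0 : forall i, (i < n)%N -> 0 < a i.+1.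
Hypothesis a_width : forall i, (i < n)%N -> a i.+1 * (x n - x 0) < 1.

Lemma x_le i j : (i <= j)%N -> (j <= n)%N -> x i <= x j.
Proof.
elim: j => [|j IH] ij jn; first by move: ij; rewrite leqn0 => /eqP->.
move: ij; rewrite leq_eqVlt => /orP[/eqP-> // | ij].
exact: le_trans (IH ij (ltnW jn)) (ltW (x_incr jn)).
Qed.

(* The factor k = i + 1 of S, with its unknown y_k in (x_i, x_k), is indexed by
   i < n from here on. *)
Definition wave i t := sin (a i.+1 * pi * t).

Lemma wave_gt0 i t : (i < n)%N -> 0 < t -> t <= x n - x 0 -> 0 < wave i t.
Proof.
move=> i_n t0 tD; have a0 := a_gt0 i_n; have pi0 := @pi_gt0 R.
have at1 : a i.+1 * t < 1 by apply: le_lt_trans (a_width i_n); rewrite ler_pM2l.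
apply: sin_gt0_pi; apply/andP; split; first by rewrite !mulr_gt0.
by rewrite mulrAC gtr_pMl.
Qed.

Lemma wave_lt0 i t : (i < n)%N -> t < 0 -> - (x n - x 0) <= t -> wave i t < 0.
Proof.
move=> i_n t0 tD; have : 0 < wave i (- t).
  by apply: wave_gt0 => //; [rewrite oppr_gt0 | rewrite lerNl].
by rewrite /wave mulrN sinN oppr_gt0.
Qed.

Lemma wave_ge0 i t : (i < n)%N -> 0 <= t -> t <= x n - x 0 -> 0 <= wave i t.
Proof.
move=> i_n; rewrite le_eqVlt => /orP[/eqP<- | t0 tD]; last exact/ltW/wave_gt0.
by rewrite /wave mulr0 sin0.
Qed.

Lemma wave_cross i p q s1 s2 :
  wave i (q - s2) * wave i (p - s1) - wave i (q - s1) * wave i (p - s2) =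
  wave i (q - p) * wave i (s2 - s1).
Proof. by rewrite /wave !mulrBr !sinB; ring. Qed.

Lemma wave_sub_continuous i c : continuous (fun t => wave i (c - t)).
Proof.
move=> t; apply: (continuous_comp (f := fun t => a i.+1 * pi * (c - t))).
  apply: continuousM; first exact: cvg_cst.
  by apply: continuousB; [exact: cvg_cst | exact: cvg_id].
exact: continuous_sin.
Qed.

Definition logw i t := nu i.+1 * ln `|wave i t|.

Definition log_ratio i p q s := logw i (q - s) - logw i (p - s).

Lemma log_ratio_le i p q s1 s2 : (i < n)%N ->
  x 0 <= p -> p < q -> q <= x n -> x 0 <= s1 -> s1 <= s2 -> s2 <= x n ->
  s2 < p \/ q < s1 -> log_ratio i p q s1 <= log_ratio i p q s2.
Proof.
move=> i_n p0 pq qn s10 s12 s2n outside.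
have pos : 0 < wave i (q - s1) * wave i (p - s2).
  case: outside => [s2p | qs1].
    by rewrite mulr_gt0 // wave_gt0 //; lra.
  by rewrite nmulr_rgt0 ?wave_lt0 //; lra.
have cross : wave i (q - s1) * wave i (p - s2) <= wave i (q - s2) * wave i (p - s1).
  rewrite -subr_ge0 wave_cross mulr_ge0 //; first by apply/ltW/wave_gt0 => //; lra.
  by apply: wave_ge0 => //; lra.
rewrite /log_ratio /logw -!mulrBr ler_pM2l ?nu_gt0 //.
by apply: ln_norm_ratio_le; rewrite ?(gtr0_norm pos) ?(gtr0_norm (lt_le_trans pos cross)).
Qed.

Lemma log_ratio_lt i p q s1 s2 : (i < n)%N ->
  x 0 <= p -> p < s1 -> s1 < s2 -> s2 < q -> q <= x n ->
  log_ratio i p q s2 < log_ratio i p q s1.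
Proof.
move=> i_n p0 ps1 s12 s2q qn.
have A1 : 0 < wave i (q - s1) by apply: wave_gt0 => //; lra.
have B2 : wave i (p - s2) < 0 by apply: wave_lt0 => //; lra.
have A2 : 0 < wave i (q - s2) by apply: wave_gt0 => //; lra.
have B1 : wave i (p - s1) < 0 by apply: wave_lt0 => //; lra.
have cross : wave i (q - s1) * wave i (p - s2) < wave i (q - s2) * wave i (p - s1).
  by rewrite -subr_gt0 wave_cross mulr_gt0 // wave_gt0 //; lra.
have n12 : wave i (q - s1) * wave i (p - s2) < 0 by rewrite pmulr_rlt0.
have n21 : wave i (q - s2) * wave i (p - s1) < 0 by rewrite pmulr_rlt0.
rewrite /log_ratio /logw -!mulrBr ltr_pM2l ?nu_gt0 //.
by apply: ln_norm_ratio_lt; rewrite !ltr0_norm //; lra.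
Qed.

Lemma log_ratio_continuous i p q s : wave i (q - s) != 0 -> wave i (p - s) != 0 ->
  {for s, continuous (log_ratio i p q)}.
Proof.
have logw_cont c : wave i (c - s) != 0 -> {for s, continuous (fun t => logw i (c - t))}.
  move=> w0; apply: continuousM; first exact: cvg_cst.
  apply: (continuous_comp (f := fun t => `|wave i (c - t)|)); last first.
    by apply: continuous_ln; rewrite normr_gt0.
  apply: (continuous_comp (f := fun t => wave i (c - t))); last exact: norm_continuous.
  exact: wave_sub_continuous.
by move=> wq wp; apply: continuousB; apply: logw_cont.
Qed.

Definition step_log j i := log_ratio i (x j) (x j.+1).

Lemma step_log_mono_below j i s1 s2 : (i < j < n)%N ->
  x i <= s1 -> s1 <= s2 -> s2 < x i.+1 -> step_log j i s1 <= step_log j i s2.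
Proof.
move=> /andP[ij j_n] xs1 s12 s2x; have i_n := ltn_trans ij j_n.
have x0i := x_le (leq0n i) (ltnW i_n); have xij := x_le ij (ltnW j_n).
have xjj := x_incr j_n; have xjn := x_le j_n (leqnn n).
by apply: log_ratio_le => //; first [lra | left; lra].
Qed.

Lemma step_log_mono_above j i s1 s2 : (j < i < n)%N ->
  x i < s1 -> s1 <= s2 -> s2 <= x i.+1 -> step_log j i s1 <= step_log j i s2.
Proof.
move=> /andP[ji i_n] xs1 s12 s2x; have j_n := ltn_trans ji i_n.
have x0j := x_le (leq0n j) (ltnW j_n); have xji := x_le ji (ltnW i_n).
have xjj := x_incr j_n; have xin := x_le i_n (leqnn n).
by apply: log_ratio_le => //; first [lra | right; lra].
Qed.

Lemma step_log_sum i s : \sum_(j < n) step_log j i s = log_ratio i (x 0) (x n) s.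
Proof.
rewrite /log_ratio -(telescope_sumr (fun j => logw i (x j - s)) (leq0n n)) big_mkord.
by apply: eq_bigr => j _.
Qed.

Lemma step_log_colsum_decr i s1 s2 : (i < n)%N -> x i < s1 -> s1 < s2 -> s2 < x i.+1 ->
  \sum_(j < n) step_log j i s2 < \sum_(j < n) step_log j i s1.
Proof.
move=> i_n xs1 s12 s2x; rewrite !step_log_sum.
have x0i := x_le (leq0n i) (ltnW i_n); have xin := x_le i_n (leqnn n).
by apply: log_ratio_lt => //; lra.
Qed.

Lemma step_log_diag_cont i s : (i < n)%N -> x i < s < x i.+1 ->
  {for s, continuous (step_log i i)}.
Proof.
move=> i_n /andP[xs sx].
have x0i := x_le (leq0n i) (ltnW i_n); have xin := x_le i_n (leqnn n).
by apply: log_ratio_continuous; [rewrite gt_eqF // | rewrite lt_eqF //];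
  [apply: wave_gt0 | apply: wave_lt0] => //; lra.
Qed.

Lemma step_log_diag_unbounded_above i M : (i < n)%N ->
  exists2 s, x i < s < x i.+1 & M <= step_log i i s.
Proof.
move=> i_n; have x0i := x_le (leq0n i) (ltnW i_n); have xin := x_le i_n (leqnn n).
have xii := x_incr i_n.
have u0 : wave i (x i.+1 - x i) != 0 by rewrite gt_eqF // wave_gt0 //; lra.
have v0 : wave i (x i - x i) = 0 by rewrite /wave subrr mulr0 sin0.
have near_xi := near_ln_ratio_ge (M / nu i.+1) (@wave_sub_continuous i (x i.+1) (x i))
  (@wave_sub_continuous i (x i) (x i)) u0 v0.
have [s /andP[xs sx] Ms] := near_right_point near_xi xii.
exists s; first by rewrite xs sx.
have ws : wave i (x i - s) != 0 by rewrite lt_eqF // wave_lt0 //; lra.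
by rewrite /step_log /log_ratio /logw -mulrBr mulrC -ler_pdivrMr ?nu_gt0 //; exact: Ms.
Qed.

Lemma step_log_diag_unbounded_below i M : (i < n)%N ->
  exists2 s, x i < s < x i.+1 & step_log i i s <= M.
Proof.
move=> i_n; have x0i := x_le (leq0n i) (ltnW i_n); have xin := x_le i_n (leqnn n).
have xii := x_incr i_n.
have u0 : wave i (x i - x i.+1) != 0 by rewrite lt_eqF // wave_lt0 //; lra.
have v0 : wave i (x i.+1 - x i.+1) = 0 by rewrite /wave subrr mulr0 sin0.
have near_xi1 := near_ln_ratio_ge (- (M / nu i.+1))
  (@wave_sub_continuous i (x i) (x i.+1)) (@wave_sub_continuous i (x i.+1) (x i.+1)) u0 v0.
have [s /andP[xs sx] Ms] := near_left_point near_xi1 xii.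
exists s; first by rewrite xs sx.
have ws : wave i (x i.+1 - s) != 0 by rewrite gt_eqF // wave_gt0 //; lra.
rewrite /step_log /log_ratio /logw -mulrBr mulrC -ler_pdivlMr ?nu_gt0 //.
by have := Ms ws; lra.
Qed.

Local Notation box := (in_box n x (fun i => x i.+1)).

Lemma step_log_solution b : exists y,
  box y /\ forall j, (j < n)%N -> sys_map n step_log y j = b j.
Proof.
apply: sys_solution.
- exact: step_log_mono_below.
- exact: step_log_mono_above.
- exact: step_log_colsum_decr.
- exact: step_log_diag_cont.
- exact: step_log_diag_unbounded_above.
- exact: step_log_diag_unbounded_below.
Qed.

Lemma step_log_inj y w : box y -> box w ->
  (forall j, (j < n)%N -> sys_map n step_log y j = sys_map n step_log w j) ->
  forall i, (i < n)%N -> y i = w i.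
Proof.
apply: sys_map_inj.
- exact: step_log_mono_below.
- exact: step_log_mono_above.
- exact: step_log_colsum_decr.
Qed.

Definition node_log (y : nat -> R) j := \sum_(i < n) logw i (x j - y i).

Lemma node_log_succ y j : node_log y j.+1 = node_log y j + sys_map n step_log y j.
Proof. by rewrite /node_log /sys_map /step_log /log_ratio sumrB addrC subrK. Qed.

Lemma wave_node_gt0 y j i : box y -> (j <= n)%N -> (i < j)%N -> 0 < wave i (x j - y i).
Proof.
move=> yb j_n ij; have i_n := leq_trans ij j_n; have /andP[xy yx] := yb i i_n.
have x0i := x_le (leq0n i) (ltnW i_n); have xij := x_le ij j_n.
have xjn := x_le j_n (leqnn n).
by apply: wave_gt0 => //; lra.
Qed.

Lemma wave_node_lt0 y j i : box y -> (i < n)%N -> (j <= i)%N -> wave i (x j - y i) < 0.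
Proof.
move=> yb i_n ji; have /andP[xy yx] := yb i i_n.
have x0j := x_le (leq0n j) (leq_trans ji (ltnW i_n)); have xji := x_le ji (ltnW i_n).
have xin := x_le i_n (leqnn n); have xii := x_incr i_n.
by apply: wave_lt0 => //; lra.
Qed.

Lemma S_fun_node C y j : box (fun i => y i.+1) -> (j <= n)%N ->
  S_fun n C a nu y (x j) = C * expR (node_log (fun i => y i.+1) j).
Proof.
move=> yb j_n; rewrite /S_fun /node_log expR_sum big_add1 big_mkord; congr (_ * _).
apply: eq_bigr => i _; rewrite -/(wave i (x j - y i.+1)).
have : `|wave i (x j - y i.+1)| != 0.
  rewrite normr_eq0; case: (ltnP i j) => ij.
    by rewrite gt_eqF // (wave_node_gt0 (y := fun i => y i.+1)).
  by rewrite lt_eqF // (wave_node_lt0 (y := fun i => y i.+1)).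
by rewrite /powR /logw => /negbTE->; rewrite mulrC.
Qed.

Lemma node_log_step alpha C y j : 0 < C ->
  C * expR (node_log y j) = alpha j -> C * expR (node_log y j.+1) = alpha j.+1 ->
  sys_map n step_log y j = ln (alpha j.+1) - ln (alpha j).
Proof.
by move=> C0 <- <-; rewrite !lnM ?posrE ?expR_gt0 // !expRK node_log_succ; ring.
Qed.

Lemma is_solution_nodes alpha C y : is_solution n x a nu alpha C y ->
  [/\ 0 < C, box (fun i => y i.+1) &
    forall j, (j <= n)%N -> C * expR (node_log (fun i => y i.+1) j) = alpha j].
Proof.
move=> [C0 [y_int yS]]; have yb : box (fun i => y i.+1).
  by move=> i i_n; apply/andP; exact: y_int.
by split=> // j j_n; rewrite -S_fun_node // yS.
Qed.

Lemma interpolation_exists alpha : (forall j, (j <= n)%N -> 0 < alpha j) ->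
  exists C y, is_solution n x a nu alpha C y.
Proof.
move=> alpha0.
have [ys [ysb ysE]] := step_log_solution (fun j => ln (alpha j.+1) - ln (alpha j)).
have node_ys j : (j <= n)%N ->
    node_log ys j = node_log ys 0 + (ln (alpha j) - ln (alpha 0%N)).
  elim: j => [|j IH] j_n; first by rewrite subrr addr0.
  by rewrite node_log_succ IH ?(ltnW j_n) // ysE //; ring.
pose C := alpha 0%N / expR (node_log ys 0).
exists C, (fun k => ys k.-1); split; first by rewrite divr_gt0 ?expR_gt0 ?alpha0.
split=> [j j_n | j j_n]; first by apply/andP; exact: ysb.
rewrite (@S_fun_node C (fun k => ys k.-1) j) //.
change (C * expR (node_log ys j) = alpha j).
rewrite node_ys // /C !expRD expRN !lnK ?posrE ?alpha0 //.
have := expR_gt0 (node_log ys 0); have := alpha0 0%N (leq0n n) => a0 e0.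
by field; rewrite !lt0r_neq0.
Qed.

Lemma interpolation_unique alpha C C' y y' :
  is_solution n x a nu alpha C y -> is_solution n x a nu alpha C' y' ->
  C = C' /\ forall k, (1 <= k <= n)%N -> y k = y' k.
Proof.
move=> /is_solution_nodes[C0 yb yS] /is_solution_nodes[C'0 y'b y'S].
have same_y : forall i, (i < n)%N -> y i.+1 = y' i.+1.
  apply: step_log_inj yb y'b _ => j j_n.
  by rewrite !(node_log_step C0 (yS _ _) (yS _ _)) ?(node_log_step C'0 (y'S _ _) (y'S _ _))
    ?(ltnW j_n).
have same_node : node_log (fun i => y i.+1) 0 = node_log (fun i => y' i.+1) 0.
  by apply: eq_bigr => i _; rewrite same_y.
split; last by case=> // k /andP[_ k_n]; apply: same_y.
apply: (mulIf (lt0r_neq0 (expR_gt0 (node_log (fun i => y i.+1) 0)))) => /=.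
by rewrite yS // same_node y'S.
Qed.

Lemma sin_pow_node y j k (m : nat) : box (fun i => y i.+1) -> (j <= n)%N ->
  (1 <= k <= n)%N ->
  sin (a k * pi * (x j - y k)) ^+ m =
  (-1) ^+ (if (j < k)%N then m else 0%N) * `|sin (a k * pi * (x j - y k))| ^+ m.
Proof.
move=> yb j_n; case: k => // i /andP[_ i_n].
rewrite -/(wave i (x j - y i.+1)); case: ltnP => ji.
  rewrite ltr0_norm ?(wave_node_lt0 (y := fun i => y i.+1)) //.
  by rewrite -exprMn mulN1r opprK.
by rewrite gtr0_norm ?(wave_node_gt0 (y := fun i => y i.+1)) // mul1r.
Qed.

Lemma T_fun_node alpha C y m : is_solution n x a nu alpha C y ->
  (forall k, (1 <= k <= n)%N -> nu k = (m k)%:R) -> forall j, (j <= n)%N ->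
  T_fun n C a y m (x j) = (-1) ^+ (\sum_(j.+1 <= k < n.+1) m k)%N * alpha j.
Proof.
move=> sol num j j_n; have [_ yb _] := is_solution_nodes sol.
rewrite -sol.2.2 // /T_fun /S_fun mulrCA -sum_nat_gtn // -prodrXr -big_split.
congr (C * _); apply: eq_big_nat => k k_n.
by rewrite sin_pow_node // num // powR_mulrn ?normr_ge0.
Qed.

End Interpolation.

Theorem theorem9p7 (R : realType) (n : nat) (x nu a alpha : nat -> R)
  (hx0 : 0 <= x 0%N) (hxn : x n <= 1)
  (hxinc : forall j, (j < n)%N -> x j < x j.+1)
  (hnu : forall k, (1 <= k <= n)%N -> 0 < nu k)
  (ha : forall k, (1 <= k <= n)%N -> 0 < a k /\ a k <= 1)
  (halpha : forall j, (j <= n)%N -> 0 < alpha j) :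
  (* (a) under x_n - x_0 < 1;  (c) or under a_k < 1 for all k *)
  (x n - x 0%N < 1 \/ (forall k, (1 <= k <= n)%N -> a k < 1)) ->
  (* existence *)
  (exists (C : R) (y : nat -> R), is_solution n x a nu alpha C y) /\
  (* uniqueness of C and of y_1, ..., y_n *)
  (forall (C C' : R) (y y' : nat -> R),
     is_solution n x a nu alpha C y -> is_solution n x a nu alpha C' y' ->
     C = C' /\ (forall k, (1 <= k <= n)%N -> y k = y' k)) /\
  (* (b) integer exponents: sign pattern of T at the nodes *)
  (forall (C : R) (y : nat -> R) (m : nat -> nat),
     is_solution n x a nu alpha C y ->
     (forall k, (1 <= k <= n)%N -> nu k = (m k)%:R) ->
     forall j, (j <= n)%N ->
       T_fun n C a y m (x j) = (-1) ^+ (\sum_(j.+1 <= k < n.+1) m k)%N * alpha j).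
Proof.
move=> narrow.
have nu_gt0 i : (i < n)%N -> 0 < nu i.+1 by move=> i_n; exact: hnu.
have a_gt0 i : (i < n)%N -> 0 < a i.+1 by move=> i_n; have [] := ha i.+1 i_n.
have spread0 : 0 <= x n - x 0%N by rewrite subr_ge0 (x_le hxinc (leq0n n) (leqnn n)).
have a_width i : (i < n)%N -> a i.+1 * (x n - x 0%N) < 1.
  move=> i_n; have [a0 a1] := ha i.+1 i_n.
  by case: narrow => [spread1 | /(_ i.+1 i_n) a1']; nra.
split; first exact: interpolation_exists.
split; first exact: interpolation_unique.
exact: T_fun_node.
Qed.
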